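(* Let $G$ be an influence graph that is a directed line on nodes $\{1,\dots,n\}$ with edges $(i+1,i)$ for $i=1,\dots,n-1$, and for each $i$ let $p_i$ be the probability that node $i$ reaches node $1$ in the live-edge graph. Then for every $(x_1,\dots,x_n)\in[0,1]^n$ and every $i\in\{1,\dots,n\}$, $$F_1(0,\dots,0,x_i,\dots,x_n)-F_1(0,\dots,0,x_{i+1},\dots,x_n)=x_ip_i\big(1-F_i(0,\dots,0,x_{i+1},\dots,x_n)\big),$$ where in each argument vector the first coordinates (up to position $i-1$, resp. $i$) are $0$ and coordinate $j$ equals $x_j$ for the remaining positions.
   Context: IC model: each edge $e$ has probability $p_e\in[0,1]$; a realization (live-edge graph) $\phi$ contains each edge independently with probability $p_e$, with distribution $\mathcal{P}$. $\Gamma(S,\phi)$ is the set of nodes reachable from $S$ in $\phi$. For a node $u$ and $S\subseteq\{1,\dots,n\}$, $\sigma_u(S)=\Pr_{\Phi\sim\mathcal{P}}[u\in\Gamma(S,\Phi)]$, and $F_u(y_1,\dots,y_n)=\sum_{S\subseteq[n]}\big(\prod_{j\in S}y_j\prod_{j\notin S}(1-y_j)\big)\sigma_u(S)$, i.e. the probability that $u$ is activated when each node $j$ is independently a seed with probability $y_j$. *)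

From mathcomp Require Import all_boot all_order all_algebra.
Set Implicit Arguments. Unset Strict Implicit. Unset Printing Implicit Defensive.
Import Order.TTheory GRing.Theory Num.Theory.
Local Open Scope ring_scope.

Section IC.
Variables (R : realFieldType) (V : finType).

Definition live (phi : {set V * V}) : rel V := fun u v => (u, v) \in phi.

Definition Gamma (S : {set V}) (phi : {set V * V}) : {set V} :=
  [set v | [exists s in S, connect (live phi) s v]].

Definition real_prob (E : {set V * V}) (p : V * V -> R) (phi : {set V * V}) : R :=
  \prod_(e in E) (if e \in phi then p e else 1 - p e).

Definition sigma (E : {set V * V}) (p : V * V -> R) (u : V) (S : {set V}) : R :=
  \sum_(phi in powerset E) real_prob E p phi * (u \in Gamma S phi)%:R.

Definition Fu (E : {set V * V}) (p : V * V -> R) (u : V) (y : V -> R) : R :=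
  \sum_(S : {set V})
     ((\prod_(j in S) y j) * (\prod_(j in ~: S) (1 - y j))) * sigma E p u S.
End IC.

(* Directed line on nodes 'I_n.+1 (node k here = node k+1 of the paper),
   with edges (k+1, k). *)
Definition line_edges (n : nat) : {set 'I_n.+1 * 'I_n.+1} :=
  [set e | val e.1 == (val e.2).+1].

From mathcomp Require Import all_boot all_order all_algebra zify ring.
Set Implicit Arguments. Unset Strict Implicit. Unset Printing Implicit Defensive.
Import Order.TTheory GRing.Theory Num.Theory.
Local Open Scope ring_scope.

(* On the line, u is reached from the seed set S iff the first seed m >= u exists and
   every edge of the segment from m down to u is live. The seed events and edge events
   are independent product events, so
     F_u(y) = sum_m P[first seed from u is m] * P[segment u..m is live].
   From this closed form, a seedless prefix [1, i) factors as F_1 = p_i F_i, and a seed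
   at i with probability x_i gives F_i(y) = x_i + (1 - x_i) F_i(y'), where y' drops the
   seed at i; combining the two yields the identity. *)

Section ProductWeights.
Variable T : finType.

Lemma sum_powerset_prod (R : comPzSemiRingType) (D : {set T}) (f : T -> bool -> R) :
  \sum_(S in powerset D) \prod_(j in D) f j (j \in S)
  = \prod_(j in D) (f j true + f j false).
Proof.
(* Outside D, [h] forces [j \notin S], so only subsets of D survive the expansion. *)
pose h j b : R := if j \in D then f j b else (~~ b)%:R.
have -> : \prod_(j in D) (f j true + f j false) = \prod_j (h j true + h j false).
  by rewrite big_mkcond; apply: eq_bigr => j _; rewrite /h; case: (j \in D); rewrite ?add0r.
rewrite bigA_distr.
rewrite -[RHS]/(\sum_(S : {set T}) \prod_j (if j \in S then h j true else h j false)).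
rewrite [RHS](bigID (fun S : {set T} => S \subset D)) /= [X in _ = _ + X]big1 ?addr0.
  apply: eq_big => [S | S /[!powersetE] SD]; first by rewrite powersetE.
  rewrite big_mkcond; apply: eq_bigr => j _; rewrite /h.
  case: ifP => [_ | jD]; first by case: (j \in S).
  by rewrite (contraFF (subsetP SD j) jD).
by move=> S /subsetPn [j jS jD]; rewrite (bigD1 j) //= jS /h (negbTE jD) mul0r.
Qed.

Lemma natr_prod_forall (R : comPzSemiRingType) (D : {pred T}) (b : pred T) :
  \prod_(j in D) ((b j)%:R : R) = [forall j in D, b j]%:R.
Proof.
case: (boolP [forall j in D, b j]) => [/forall_inP Db | /forall_inPn [j Dj /negbTE bj]].
  by rewrite big1 // => j /Db ->.
by rewrite (bigD1 j) //= bj mul0r.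
Qed.

Lemma natr_exists_uniq (R : pzSemiRingType) (P : pred T) :
  {in P &, forall a b, a = b} -> [exists m, P m]%:R = \sum_m (P m)%:R :> R.
Proof.
move=> Puniq; case: existsP => [[m Pm] | noP]; last first.
  by rewrite big1 // => m _; case: (boolP (P m)) => // Pm; case: noP; exists m.
rewrite (bigD1 m) //= Pm big1 ?addr0 // => k km.
by case: (boolP (P k)) => // Pk; rewrite (Puniq k m Pk Pm) eqxx in km.
Qed.

Lemma sum_powerset_bernoulli_event (R : comPzRingType) (D : {set T}) (a : T -> R)
    (g : T -> bool -> bool) :
  \sum_(S in powerset D)
     (\prod_(j in D) (if j \in S then a j else 1 - a j)) * [forall j in D, g j (j \in S)]%:R
  = \prod_(j in D) ((g j true)%:R * a j + (g j false)%:R * (1 - a j)).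
Proof.
rewrite -(sum_powerset_prod D (fun j b => (g j b)%:R * (if b then a j else 1 - a j))).
apply: eq_bigr => S _; rewrite -natr_prod_forall -big_split /=.
by apply: eq_bigr => j _; case: (j \in S); rewrite mulrC.
Qed.

Lemma sum_bernoulli_event (R : comPzRingType) (a : T -> R) (g : T -> bool -> bool) :
  \sum_(S : {set T})
     (\prod_j (if j \in S then a j else 1 - a j)) * [forall j, g j (j \in S)]%:R
  = \prod_j ((g j true)%:R * a j + (g j false)%:R * (1 - a j)).
Proof.
have prod_setT (F : T -> R) : \prod_(j in [set: T]) F j = \prod_j F j.
  by apply: eq_bigl => j; rewrite in_setT.
rewrite -prod_setT -sum_powerset_bernoulli_event powersetT.
apply: eq_big => [S | S _]; first by rewrite in_setT.
by rewrite prod_setT; congr (_ * (nat_of_bool _)%:R); apply: eq_forallb => j; rewrite in_setT.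
Qed.

Lemma Fu_bernoulli (R : realFieldType) (E : {set T * T}) (p : T * T -> R) (u : T)
    (y : T -> R) :
  Fu E p u y = \sum_(S : {set T}) (\prod_j (if j \in S then y j else 1 - y j)) * sigma E p u S.
Proof.
apply: eq_bigr => S _; congr (_ * _); rewrite [RHS](bigID (mem S)) /=.
by congr (_ * _); apply: eq_big => [j | j]; rewrite ?inE //; case: (j \in S).
Qed.

End ProductWeights.

Section Line.
Variables (R : realFieldType) (n : nat).
Local Notation V := 'I_n.+1.
Local Notation E := (line_edges n).

Definition live_segment (phi : {set V * V}) (v s : V) : bool :=
  [forall e in E, (v <= e.2 < s)%N ==> (e \in phi)].

Lemma live_segment_le (phi : {set V * V}) (v m s : V) :
  (m <= s)%N -> live_segment phi v s -> live_segment phi v m.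
Proof.
move=> ms /forall_inP seg; apply/forall_inP => e eE; apply/implyP => /andP [ve em].
by apply: (implyP (seg e eE)); rewrite ve (leq_trans em ms).
Qed.

Lemma connect_line_live (phi : {set V * V}) (s v : V) : phi \subset E ->
  connect (live phi) s v -> (v <= s)%N && live_segment phi v s.
Proof.
move=> sub /connectP [pth]; elim: pth s => [|z pth IH] s /=.
  by move=> _ ->; rewrite leqnn; apply/forall_inP => e _; apply/implyP; lia.
case/andP=> sz zpth vlast; have /eqP zs : (s : nat) == z.+1.
  by have := subsetP sub _ sz; rewrite inE.
have /andP [vz /forall_inP seg] := IH z zpth vlast.
rewrite zs (leq_trans vz) //; apply/forall_inP => e eE; apply/implyP => /andP [ve es].
have [ez | ze] := ltnP e.2 z; first by apply: (implyP (seg e eE)); rewrite ve.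
(* [e.2 = z], so [e] is the first edge [(s, z)] of the path. *)
suff -> : e = (s, z) by [].
move: eE es ze; rewrite inE; case: e {ve} => a b /= /eqP ab bs zb.
by congr pair; apply: ord_inj; lia.
Qed.

Lemma live_segment_connect (phi : {set V * V}) (s v : V) :
  (v <= s)%N -> live_segment phi v s -> connect (live phi) s v.
Proof.
move=> vs; have [k sk] : exists k, s = (v + k)%N :> nat by exists (s - v)%N; rewrite subnKC.
elim: k s sk {vs} => [|k IH] s sk /forall_inP seg.
  by have -> : s = v by apply: ord_inj; rewrite sk addn0.
have vk : (v + k < n.+1)%N by have := ltn_ord s; lia.
have zs : (s, Ordinal vk) \in phi.
  by apply: (implyP (seg _ _)); rewrite ?inE /= sk; lia.
apply: connect_trans (connect1 zs) _; apply: IH => //.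
apply/forall_inP => e eE; apply/implyP => /andP [ve ek].
by apply: (implyP (seg e eE)); rewrite ve sk addnS ltnS ltnW.
Qed.

Lemma line_connect (phi : {set V * V}) (s v : V) : phi \subset E ->
  connect (live phi) s v = (v <= s)%N && live_segment phi v s.
Proof.
move=> sub; apply/idP/idP; first exact: connect_line_live.
by case/andP; apply: live_segment_connect.
Qed.

Definition first_seed (u : V) (S : {set V}) (m : V) : bool :=
  [&& (u <= m)%N, m \in S & [forall j : V, (u <= j < m)%N ==> (j \notin S)]].

Lemma first_seed_uniq (u : V) (S : {set V}) (m1 m2 : V) :
  first_seed u S m1 -> first_seed u S m2 -> m1 = m2.
Proof.
move=> /and3P [um1 m1S /forallP free1] /and3P [um2 m2S /forallP free2].
apply: val_inj; case: (ltngtP m1 m2) => // lt_m.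
  by have := free2 m1; rewrite um1 lt_m m1S.
by have := free1 m2; rewrite um2 lt_m m2S.
Qed.

Lemma first_seed_exists (u s : V) (S : {set V}) :
  s \in S -> (u <= s)%N -> exists2 m, first_seed u S m & (m <= s)%N.
Proof.
move=> sS us; have sSu : (s \in S) && (u <= s)%N by rewrite sS.
case: (@arg_minnP _ s (fun j => (j \in S) && (u <= j)%N) val sSu) => m /andP [mS um] m_min.
exists m; last by apply: m_min; rewrite sS.
rewrite /first_seed um mS; apply/forallP => j; apply/implyP => /andP [uj jm].
by apply: contraTN jm => jS; rewrite -leqNgt m_min ?jS.
Qed.

Lemma mem_Gamma_line (u : V) (S : {set V}) (phi : {set V * V}) : phi \subset E ->
  (u \in Gamma S phi) = [exists m, first_seed u S m && live_segment phi u m].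
Proof.
move=> sub; rewrite inE; apply/exists_inP/existsP => [[s sS] | [m /andP [mseed seg]]].
  rewrite line_connect // => /andP [us seg].
  have [m mseed ms] := first_seed_exists sS us.
  by exists m; rewrite mseed (live_segment_le ms seg).
case/and3P: mseed => um mS _; exists m => //.
by rewrite line_connect // um.
Qed.

Variable p : V * V -> R.

Definition path_prob (u m : V) : R :=
  \prod_(e in E) (if (u <= e.2 < m)%N then p e else 1).

Lemma sigma_line (u : V) (S : {set V}) :
  sigma E p u S = \sum_m (first_seed u S m)%:R * path_prob u m.
Proof.
rewrite /sigma; under eq_bigr => phi.
  rewrite powersetE => sub.
  rewrite mem_Gamma_line // natr_exists_uniq; last first.
    by move=> m1 m2 /andP [seed1 _] /andP [seed2 _]; apply: first_seed_uniq seed1 seed2.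
  rewrite mulr_sumr; under eq_bigr do rewrite -mulnb natrM mulrCA.
  over.
rewrite exchange_big /=; apply: eq_bigr => m _; rewrite -mulr_sumr; congr (_ * _).
rewrite (sum_powerset_bernoulli_event E p (fun e b => (u <= e.2 < m)%N ==> b)).
by apply: eq_bigr => e _; case: ifP => _; rewrite /= ?mul1r ?mul0r ?addr0 ?subrKC.
Qed.

Lemma path_prob_id (u : V) : path_prob u u = 1.
Proof. by apply: big1 => e _; rewrite ltnNge andbN. Qed.

Lemma path_prob_split (u i m : V) : (u <= i <= m)%N ->
  path_prob u m = path_prob u i * path_prob i m.
Proof.
move=> /andP [ui im]; rewrite -big_split; apply: eq_bigr => e _ /=.
case: (ltnP e.2 i) => ei; case: (ltnP e.2 m) => em; case: (leqP u e.2) => ue;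
  rewrite /= ?mulr1 ?mul1r //; exfalso; lia.
Qed.

Lemma sigma_line_set1 (u i : V) : sigma E p u [set i] = (u <= i)%:R * path_prob u i.
Proof.
rewrite sigma_line (bigD1 i) //= big1 ?addr0 => [|m mi]; last first.
  by rewrite /first_seed in_set1 (negbTE mi) andbF mul0r.
suff free : [forall j : V, (u <= j < i)%N ==> (j \notin [set i])].
  by rewrite /first_seed set11 free !andbT.
apply/forallP => j; apply/implyP => /andP [_ ji]; rewrite in_set1.
by apply: contraTN ji => /eqP ->; rewrite ltnn.
Qed.

Definition first_seed_prob (u : V) (y : V -> R) (m : V) : R :=
  (u <= m)%:R * \prod_j (if j == m then y j else if (u <= j < m)%N then 1 - y j else 1).

Lemma sum_bernoulli_first_seed (u m : V) (y : V -> R) :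
  \sum_(S : {set V}) (\prod_j (if j \in S then y j else 1 - y j)) * (first_seed u S m)%:R
  = first_seed_prob u y m.
Proof.
rewrite /first_seed_prob; case: (leqP u m) => [um | mu]; last first.
  by rewrite mul0r big1 // => S _; rewrite /first_seed leqNgt mu mulr0.
pose g j b := if j == m then b else if (u <= j < m)%N then ~~ b else true.
transitivity (\sum_(S : {set V})
    (\prod_j (if j \in S then y j else 1 - y j)) * [forall j, g j (j \in S)]%:R).
  apply: eq_bigr => S _; congr (_ * (nat_of_bool _)%:R).
  rewrite /first_seed um /=; apply/andP/forallP => [[mS /forallP free] j | gS].
    rewrite /g; case: eqP => [-> // | _]; case: ifP => // window.
    by have := free j; rewrite window.
  split; first by have := gS m; rewrite /g eqxx.
  apply/forallP => j; apply/implyP => window; have := gS j; rewrite /g window.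
  by case: eqP window => [-> | _ _ //]; rewrite ltnn andbF.
rewrite sum_bernoulli_event mul1r; apply: eq_bigr => j _; rewrite /g.
by case: eqP => _; [|case: ifP => _]; rewrite /= ?mul1r ?mul0r ?addr0 ?add0r ?subrKC.
Qed.

Lemma Fu_line (u : V) (y : V -> R) :
  Fu E p u y = \sum_m first_seed_prob u y m * path_prob u m.
Proof.
rewrite Fu_bernoulli; under eq_bigr do rewrite sigma_line mulr_sumr.
rewrite exchange_big /=; apply: eq_bigr => m _.
by rewrite -sum_bernoulli_first_seed mulr_suml; apply: eq_bigr => S _; rewrite mulrA.
Qed.

Lemma first_seed_prob_gt (u m : V) (y : V -> R) : (m < u)%N -> first_seed_prob u y m = 0.
Proof. by move=> mu; rewrite /first_seed_prob leqNgt mu mul0r. Qed.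

Lemma first_seed_prob_seed0 (u m : V) (y : V -> R) : y m = 0 -> first_seed_prob u y m = 0.
Proof. by move=> ym; rewrite /first_seed_prob (bigD1 m) //= eqxx ym mul0r mulr0. Qed.

Lemma first_seed_prob_id (u : V) (y : V -> R) : first_seed_prob u y u = y u.
Proof.
rewrite /first_seed_prob leqnn mul1r (bigD1 u) //= eqxx big1 ?mulr1 // => j /negbTE ->.
by rewrite ltnNge andbN.
Qed.

Lemma first_seed_prob_prefix (u i m : V) (y : V -> R) : (u <= i <= m)%N ->
  (forall j : V, (u <= j < i)%N -> y j = 0) ->
  first_seed_prob u y m = first_seed_prob i y m.
Proof.
move=> /andP [ui im] y0; rewrite /first_seed_prob im (leq_trans ui im).
congr (_ * _); apply: eq_bigr => j _; case: eqP => // _.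
have [ji | ij] := ltnP j i; last by rewrite (leq_trans ui ij).
case: ifP => // /andP [uj _].
by rewrite y0 ?uj ?ji // subr0.
Qed.

Lemma first_seed_prob_unseed (u m : V) (y y' : V -> R) :
  y' u = 0 -> (forall j, j != u -> y' j = y j) -> m != u ->
  first_seed_prob u y m = (1 - y u) * first_seed_prob u y' m.
Proof.
move=> y'u y'E mu; rewrite /first_seed_prob.
have [um | mlu] := leqP u m; last by rewrite !mul0r mulr0.
have ltum : (u < m)%N by rewrite ltn_neqAle um andbT eq_sym.
rewrite !mul1r (bigD1 u) //= [X in _ = _ * X](bigD1 u) //= eq_sym (negbTE mu).
rewrite leqnn ltum y'u subr0 mul1r; congr (_ * _).
by apply: eq_bigr => j ju; rewrite y'E.
Qed.

Lemma Fu_line_prefix (u i : V) (y : V -> R) : (u <= i)%N ->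
  (forall j : V, (u <= j < i)%N -> y j = 0) ->
  Fu E p u y = path_prob u i * Fu E p i y.
Proof.
move=> ui y0; rewrite !Fu_line mulr_sumr; apply: eq_bigr => m _.
have [mi | im] := ltnP m i.
  rewrite (first_seed_prob_gt _ mi) !mul0r mulr0.
  have [um | mu] := leqP u m; last by rewrite first_seed_prob_gt ?mul0r.
  by rewrite first_seed_prob_seed0 ?mul0r // y0 ?um.
by rewrite (first_seed_prob_prefix _ y0) ?ui // (path_prob_split (u:=u) (i:=i)) ?ui // mulrCA.
Qed.

Lemma Fu_line_seed (u : V) (y y' : V -> R) :
  y' u = 0 -> (forall j, j != u -> y' j = y j) ->
  Fu E p u y = y u + (1 - y u) * Fu E p u y'.
Proof.
move=> y'u y'E; rewrite !Fu_line (bigD1 u) //= [in RHS](bigD1 u) //=.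
rewrite first_seed_prob_id (first_seed_prob_seed0 _ y'u) path_prob_id mulr1 mul0r add0r.
rewrite mulr_sumr; congr (_ + _); apply: eq_bigr => m mu.
by rewrite (first_seed_prob_unseed y'u y'E mu) [RHS]mulrA.
Qed.

End Line.

Theorem lemma7 (R : realFieldType) (n : nat)
  (p : 'I_n.+1 * 'I_n.+1 -> R)
  (hp : forall e, e \in line_edges n -> 0 <= p e <= 1)
  (x : 'I_n.+1 -> R) (hx : forall j, 0 <= x j <= 1)
  (i : 'I_n.+1) :
  Fu (line_edges n) p ord0 (fun j => if (j < i)%N then 0 else x j)
  - Fu (line_edges n) p ord0 (fun j => if (j <= i)%N then 0 else x j)
  = x i * sigma (line_edges n) p ord0 [set i]
    * (1 - Fu (line_edges n) p i (fun j => if (j <= i)%N then 0 else x j)).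
Proof.
set y := fun j : 'I_n.+1 => if (j < i)%N then 0 else x j.
set y' := fun j : 'I_n.+1 => if (j <= i)%N then 0 else x j.
have Fu_y : Fu (line_edges n) p ord0 y = path_prob p ord0 i * Fu (line_edges n) p i y.
  by apply: Fu_line_prefix => // j /andP [_ ji]; rewrite /y ji.
have Fu_y' : Fu (line_edges n) p ord0 y' = path_prob p ord0 i * Fu (line_edges n) p i y'.
  by apply: Fu_line_prefix => // j /andP [_ ji]; rewrite /y' ltnW.
have Fu_seed_i : Fu (line_edges n) p i y = y i + (1 - y i) * Fu (line_edges n) p i y'.
  apply: Fu_line_seed => [|j]; first by rewrite /y' leqnn.
  by rewrite /y /y' leq_eqVlt => /negbTE; rewrite -val_eqE => ->.
have y_i : y i = x i by rewrite /y ltnn.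
rewrite sigma_line_set1 leq0n mul1r Fu_y Fu_y' Fu_seed_i y_i; ring.
Qed.
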